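(* Let $\mathcal{T}$ be a tangle of order $k$ in a connectivity system $(E,\lambda)$, and let $\mathcal{S}$ be a tree compatible set. Let $n\geq 2$, and let $\Phi=(P_1,\ldots,P_n)$ be a $k$-flower in $\mathcal{T}$. If $P_1\subseteq \mathrm{fcl}_{\mathcal{T}}(P_2)$, then the concatenation $\Phi '=(P_1\cup P_2,P_3,\ldots, P_n)$ of $\Phi$ is $\mathcal{T}$-equivalent to $\Phi$ with respect to $\mathcal{S}$.
   Context: A connectivity system is a pair $(E,\lambda)$ with $E$ finite and $\lambda$ an integer-valued symmetric submodular function on subsets of $E$. $X$ is $k$-separating if $\lambda(X)\le k$; a $k$-separation is an unordered partition $(X,E-X)$ with $\lambda(X)\le k$. A tangle of order $k$ is a collection $\mathcal T$ of subsets of $E$ with (T1) $\lambda(A)<k$ for $A\in\mathcal T$; (T2) if $\lambda(A)\le k-1$ then $A$ or $E-A$ is in $\mathcal T$; (T3) $A\cup B\cup C\ne E$ for $A,B,C\in\mathcal T$; (T4) $E-\{e\}\notin\mathcal T$. A set is $\mathcal T$-weak if contained in a member of $\mathcal T$, otherwise $\mathcal T$-strong; partitions/$k$-separations are $\mathcal T$-strong if all parts are. A $\mathcal T$-strong $k$-separating $X$ is fully closed if $X\cup Y$ is not $k$-separating for every nonempty $\mathcal T$-weak $Y\subseteq E-X$; $\mathrm{fcl}_{\mathcal T}(X)$ is the intersection of all fully closed $k$-separating sets containing $X$. $\mathcal T$-strong $k$-separations $(X,Y),(X',Y')$ are $\mathcal T$-equivalent if $\{\mathrm{fcl}_{\mathcal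 T}(X),\mathrm{fcl}_{\mathcal T}(Y)\}=\{\mathrm{fcl}_{\mathcal T}(X'),\mathrm{fcl}_{\mathcal T}(Y')\}$. $X$ is $\mathcal T$-sequential if it is $k$-separating, $E-X$ is $\mathcal T$-strong and $\mathrm{fcl}_{\mathcal T}(E-X)=E$. Let $\mathcal S$ be a set of non-$\mathcal T$-sequential $k$-separating sets with $\mathcal T$-strong complements; a $(k,\mathcal S)$-separation is a $k$-separation $(X,E-X)$ with $X,E-X\in\mathcal S$. $\mathcal S$ is tree compatible if (S1) any $\mathcal T$-strong $k$-separation $\mathcal T$-equivalent to a $(k,\mathcal S)$-separation is a $(k,\mathcal S)$-separation, and (S2) if $X\in\mathcal S$ and $(Y,E-Y)$ is a $\mathcal T$-strong $k$-separation with $X\subseteq Y$ then $Y\in\mathcal S$. A $k$-flower in $\mathcal T$ is a $\mathcal T$-strong partition $(P_1,\dots,P_n)$ of $E$ with $P_i$ and $P_i\cup P_{i+1}$ $k$-separating for all $i$ (mod $n$); it displays $(X,E-X)$ if $X$ is a union of petals. $\Phi_1\preccurlyeq_{\mathcal S}\Phi_2$ if each $(k,\mathcal S)$-separation displayed by $\Phi_1$ is $\mathcal T$-equivalent to some $(k,\mathcal S)$-separation displayed by $\Phi_2$; $\Phi_1,\Phi_2$ are $\mathcal T$-equivalent with respect to $\mathcal S$ if both $\Phi_1\preccurlyeq_{\mathcal S}\Phi_2$ and $\Phi_2\preccurlyeq_{\mathcal S}\Phi_1$. *)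

From mathcomp Require Import all_boot all_order all_algebra.
Set Implicit Arguments. Unset Strict Implicit. Unset Printing Implicit Defensive.
Import Order.TTheory GRing.Theory Num.Theory.
Local Open Scope ring_scope.

Section Conn.
Variables (E : finType) (lam : {set E} -> int) (k : int).

Definition conn_system : Prop :=
  (forall X : {set E}, lam X = lam (~: X)) /\
  (forall X Y : {set E}, lam (X :|: Y) + lam (X :&: Y) <= lam X + lam Y).

Definition ksep (X : {set E}) : bool := lam X <= k.

Definition is_tangle (T : {set {set E}}) : Prop :=
  (forall A, A \in T -> lam A < k) /\
  (forall A, lam A <= k - 1 -> (A \in T) \/ (~: A \in T)) /\
  (forall A B C, A \in T -> B \in T -> C \in T -> A :|: B :|: C != setT) /\
  (forall e : E, ~: [set e] \notin T).

Variable T : {set {set E}}.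

Definition weak (X : {set E}) : bool := [exists A in T, X \subset A].
Definition strong (X : {set E}) : bool := ~~ weak X.

Definition fully_closed (X : {set E}) : bool :=
  [&& strong X, ksep X &
     [forall Y : {set E},
        ((Y != set0) && weak Y && (Y \subset ~: X)) ==> ~~ ksep (X :|: Y)]].

Definition fcl (X : {set E}) : {set E} :=
  \bigcap_(Z | fully_closed Z && (X \subset Z)) Z.

(* T-strong k-separation (X, E - X), represented by the side X *)
Definition strong_ksep (X : {set E}) : bool :=
  [&& ksep X, strong X & strong (~: X)].

(* T-equivalence of the (unordered) separations (X, E-X) and (X', E-X') *)
Definition tequiv (X X' : {set E}) : Prop :=
  (fcl X = fcl X' /\ fcl (~: X) = fcl (~: X')) \/
  (fcl X = fcl (~: X') /\ fcl (~: X) = fcl X').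

Definition sequential (X : {set E}) : bool :=
  [&& ksep X, strong (~: X) & fcl (~: X) == setT].

Variable S : {set {set E}}.

Definition kS_sep (X : {set E}) : bool :=
  [&& ksep X, X \in S & ~: X \in S].

Definition tree_compatible : Prop :=
  (forall X, X \in S -> [/\ ksep X, strong (~: X) & ~~ sequential X]) /\
  (forall X Y, strong_ksep X -> kS_sep Y -> tequiv X Y -> kS_sep X) /\
  (forall X Y, X \in S -> strong_ksep Y -> X \subset Y -> Y \in S).

(* flowers as sequences of petals P_1,...,P_n (index i <-> P_(i+1)) *)
Definition petal (Phi : seq {set E}) (i : nat) : {set E} := nth set0 Phi i.

Definition strong_partition (Phi : seq {set E}) : Prop :=
  [/\ forall i, (i < size Phi)%N -> petal Phi i != set0,
      forall i j, (i < size Phi)%N -> (j < size Phi)%N -> i != j ->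
        [disjoint petal Phi i & petal Phi j],
      \bigcup_(i < size Phi) petal Phi i = setT &
      forall i, (i < size Phi)%N -> strong (petal Phi i)].

Definition kflower (Phi : seq {set E}) : Prop :=
  strong_partition Phi /\
  forall i, (i < size Phi)%N ->
    ksep (petal Phi i) /\
    ksep (petal Phi i :|: petal Phi ((i.+1) %% size Phi)).

Definition displays (Phi : seq {set E}) (X : {set E}) : Prop :=
  exists I : {set 'I_(size Phi)}, X = \bigcup_(i in I) petal Phi i.

Definition flower_le (Phi1 Phi2 : seq {set E}) : Prop :=
  forall X, kS_sep X -> displays Phi1 X ->
    exists2 Y, kS_sep Y /\ displays Phi2 Y & tequiv X Y.

Definition flower_equiv (Phi1 Phi2 : seq {set E}) : Prop :=
  flower_le Phi1 Phi2 /\ flower_le Phi2 Phi1.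

End Conn.

From Pilot Require Import Defs.
From mathcomp Require Import all_boot all_order all_algebra zify.
Import Order.TTheory GRing.Theory Num.Theory.
Local Open Scope ring_scope.
Set Implicit Arguments. Unset Strict Implicit. Unset Printing Implicit Defensive.

(* The concatenation displays only separations that the flower already displays.
   Conversely, up to complementation a (k,S)-separation (X, E - X) displayed by the
   flower has P2 inside X, and if P1 is not inside X we replace X by X :|: P1.
   Uncrossing X with the k-separating P1 :|: P2 shows X :|: P1 is k-separating, and
   P1 \subset fcl P2 \subset fcl X gives fcl (X :|: P1) = fcl X.  On the other side,
   a fully closed Z containing E - (X :|: P1) contains E - X: grow X to a maximal
   k-separating M inside a proper fully closed superset of X while keeping that
   implication; maximality makes M fully closed, so M contains P1.  Tree
   compatibility then transfers membership in S to X :|: P1. *)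

Section Connectivity.
Variables (E : finType) (lam : {set E} -> int) (k : int) (T : {set {set E}}).
Hypotheses (conn : conn_system lam) (tangle : is_tangle lam k T).

Local Notation ksep := (ksep lam k).
Local Notation weak := (weak T).
Local Notation strong := (strong T).
Local Notation fully_closed := (fully_closed lam k T).
Local Notation fcl := (fcl lam k T).
Local Notation tequiv := (tequiv lam k T).

Lemma weakS (A B : {set E}) : B \subset A -> weak A -> weak B.
Proof.
move=> BA /existsP [C /andP [CT AC]]; apply/existsP; exists C.
by rewrite CT (subset_trans BA AC).
Qed.

Lemma strongS (A B : {set E}) : A \subset B -> strong A -> strong B.
Proof. by move=> AB; apply: contra; apply: weakS. Qed.

Lemma mem_weak (A : {set E}) : A \in T -> weak A.
Proof. by move=> AT; apply/existsP; exists A; rewrite AT subxx. Qed.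

Lemma lamC (A : {set E}) : lam (~: A) = lam A.
Proof. by case: conn => sym _; rewrite [RHS]sym. Qed.

Lemma ksepC (A : {set E}) : ksep (~: A) = ksep A.
Proof. by rewrite /Defs.ksep lamC. Qed.

Lemma lam_setT_le (A : {set E}) : lam setT <= lam A.
Proof.
case: conn => _ /(_ A (~: A)); rewrite setUCr setICr -setCT !lamC; lia.
Qed.

Lemma tangle_lam_ge (A : {set E}) : strong A -> strong (~: A) -> k <= lam A.
Proof.
case: tangle => _ [small _] /negP sA /negP sAc; rewrite leNgt; apply/negP => ltAk.
have : lam A <= k - 1 by lia.
by case/small => /mem_weak; [exact: sA | exact: sAc].
Qed.

Lemma ksepU (A B : {set E}) : ksep A -> ksep B ->
  strong (A :&: B) -> strong (~: (A :&: B)) -> ksep (A :|: B).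
Proof.
move=> kA kB sAB sABc; have := tangle_lam_ge sAB sABc.
by case: conn => _ /(_ A B); rewrite /Defs.ksep in kA kB *; lia.
Qed.

Lemma fully_closedP (Z : {set E}) :
  reflect [/\ strong Z, ksep Z & forall Y, Y != set0 -> weak Y ->
              Y \subset ~: Z -> ~~ ksep (Z :|: Y)]
          (fully_closed Z).
Proof.
apply: (iffP and3P) => -[sZ kZ closedZ]; split=> //.
  by move=> Y Y0 wY YZ; move: (forallP closedZ Y); rewrite Y0 wY YZ.
by apply/forallP => Y; apply/implyP => /andP [/andP [Y0 wY] YZ]; apply: closedZ.
Qed.

Lemma fully_closed_absorb (Z Y : {set E}) :
  fully_closed Z -> weak (Y :\: Z) -> ksep (Z :|: Y) -> Y \subset Z.
Proof.
case/fully_closedP => _ _ closedZ wYZ; apply: contraLR => YZ.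
have := closedZ _ _ wYZ (subsetDr _ _).
by rewrite setD_eq0 setDE setUIr setUCr setIT; apply.
Qed.

Lemma fully_closed_strongC (Z : {set E}) :
  fully_closed Z -> Z != setT -> strong (~: Z).
Proof.
case/fully_closedP => _ kZ closedZ ZT; apply/negP => wZc.
have Zc0 : ~: Z != set0 by apply: contra ZT => /eqP Zc0; rewrite -[Z]setCK Zc0 setC0.
move/negP: (closedZ _ Zc0 wZc (subxx _)); apply.
by rewrite setUCr /Defs.ksep (le_trans (lam_setT_le Z)).
Qed.

(* Uncross [M :|: Y] with [Z]: the intersection contains [X], its complement [~: Z]. *)
Lemma fully_closed_absorb_weak (X M Y Z : {set E}) :
  strong X -> X \subset M -> M \subset Z -> fully_closed Z -> Z != setT ->
  weak Y -> ksep (M :|: Y) -> Y \subset Z.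
Proof.
move=> sX XM MZ fZ ZT wY kMY; have sZc := fully_closed_strongC fZ ZT.
have /fully_closedP [_ kZ _] := fZ.
apply: fully_closed_absorb fZ (weakS (subsetDl _ _) wY) _.
have <- : Z :|: (M :|: Y) = Z :|: Y by rewrite setUA (setUidPl MZ).
apply: ksepU => //.
  by apply: strongS sX; rewrite subsetI (subset_trans XM MZ) (subset_trans XM) ?subsetUl.
by apply: strongS sZc; rewrite setCS subsetIl.
Qed.

Lemma fully_closed_setC_absorb (X M Y Z Z' : {set E}) :
  strong X -> X \subset M -> ksep M -> M :|: Y \subset Z' ->
  fully_closed Z' -> Z' != setT -> weak Y ->
  fully_closed Z -> ~: (M :|: Y) \subset Z -> ~: M \subset Z.
Proof.
move=> sX XM kM MYZ' fZ' Z'T wY fZ MYcZ; have /fully_closedP [_ kZ _] := fZ.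
apply: fully_closed_absorb fZ _ _.
  apply: weakS wY; apply/subsetP => e; rewrite !inE => /andP [eZ eM].
  by apply: contraR eZ => eY; apply: (subsetP MYcZ); rewrite !inE negb_or eM eY.
apply: ksepU; rewrite ?ksepC //.
  apply: strongS (fully_closed_strongC fZ' Z'T).
  by rewrite subsetI (subset_trans _ MYcZ) ?setCS // (subset_trans (subsetUl _ _) MYZ').
by apply: strongS sX; rewrite setCI setCK (subset_trans XM) ?subsetUr.
Qed.

Lemma subset_fcl (X : {set E}) : X \subset fcl X.
Proof. by apply/bigcapsP => Z /andP []. Qed.

Lemma fcl_min (X Z : {set E}) : fully_closed Z -> X \subset Z -> fcl X \subset Z.
Proof. by move=> fZ XZ; apply: bigcap_inf; rewrite fZ XZ. Qed.

Lemma fclS (X Y : {set E}) : X \subset Y -> fcl X \subset fcl Y.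
Proof.
by move=> XY; apply/bigcapsP => Z /andP [fZ YZ]; apply: fcl_min (subset_trans XY YZ).
Qed.

Lemma eq_fcl (X Y : {set E}) :
  (forall Z, fully_closed Z -> (X \subset Z) = (Y \subset Z)) -> fcl X = fcl Y.
Proof.
move=> eqXY; apply: eq_bigl => Z.
by case fZ: (fully_closed Z); rewrite //= eqXY.
Qed.

Lemma fcl_setU_idr (X P : {set E}) : P \subset fcl X -> fcl (X :|: P) = fcl X.
Proof.
move=> Pfcl; apply: eq_fcl => Z fZ; rewrite subUset.
by apply: andb_idr => /(fcl_min fZ); apply: subset_trans Pfcl.
Qed.

Lemma fcl_neqT (X : {set E}) :
  fcl X != setT -> exists Z, [/\ fully_closed Z, X \subset Z & Z != setT].
Proof.
move=> fclT; case: (pickP [pred Z | [&& fully_closed Z, X \subset Z & Z != setT]]).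
  by move=> Z /and3P [fZ XZ ZT]; exists Z.
move=> none; case/negP: fclT; rewrite eqEsubset subsetT.
apply/bigcapsP => Z /andP [fZ XZ]; move: (none Z) => /=.
by rewrite fZ XZ /= => /negbFE/eqP ->.
Qed.

(* Grow [X] to a maximal k-separating [M] inside a proper fully closed [Z'] for which
   [~: M \subset Z] still forces [~: X \subset Z]; maximality makes [M] fully closed,
   so [P \subset M]. *)
Lemma fully_closed_setCD (X P Z Z' : {set E}) :
  strong X -> ksep X -> fully_closed Z' -> Z' != setT -> X \subset Z' ->
  P \subset fcl X -> fully_closed Z -> ~: X :\: P \subset Z -> ~: X \subset Z.
Proof.
move=> sX kX fZ' Z'T XZ' Pfcl fZ XPZ.
pose good (M : {set E}) :=
  [&& X \subset M, ksep M, M \subset Z' & (~: M \subset Z) ==> (~: X \subset Z)].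
have [M maxM XM] : {M | maxset good M & X \subset M}.
  by apply: maxset_exists; rewrite /good subxx kX XZ' implybb.
have /and4P [_ kM MZ' gM] := maxsetp maxM.
have fM : fully_closed M.
  apply/fully_closedP; split=> // [|Y Y0 wY YMc]; first exact: strongS XM sX.
  apply/negP => kMY.
  have MYZ' : M :|: Y \subset Z'.
    by rewrite subUset MZ' (fully_closed_absorb_weak sX XM MZ' fZ' Z'T wY kMY).
  have gMY : good (M :|: Y).
    rewrite /good (subset_trans XM (subsetUl _ _)) kMY MYZ' /=.
    apply/implyP => /(fully_closed_setC_absorb sX XM kM MYZ' fZ' Z'T wY fZ).
    exact: (implyP gM).
  have MY := maxsetsup maxM gMY (subsetUl _ _).
  case/set0Pn: Y0 => e eY; move/subsetP: YMc => /(_ e eY).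
  by rewrite inE -MY inE eY orbT.
apply: (implyP gM); apply: subset_trans XPZ.
by rewrite setDE subsetI !setCS XM (subset_trans Pfcl (fcl_min fM XM)).
Qed.

Lemma fcl_setCU (X P : {set E}) : strong X -> ksep X -> fcl X != setT ->
  P \subset fcl X -> fcl (~: (X :|: P)) = fcl (~: X).
Proof.
move=> sX kX /fcl_neqT [Z' [fZ' XZ' Z'T]] Pfcl.
apply: eq_fcl => Z fZ; rewrite setCU -setDE; apply/idP/idP.
  exact: fully_closed_setCD sX kX fZ' Z'T XZ' Pfcl fZ.
exact: subset_trans (subsetDl _ _).
Qed.

Lemma tequivCl (X Y : {set E}) : tequiv (~: X) Y -> tequiv X Y.
Proof. by rewrite /Defs.tequiv setCK => -[] [eq1 eq2]; [right | left]; split. Qed.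

Variable S : {set {set E}}.
Local Notation kS_sep := (kS_sep lam k S).

Lemma kS_sepC (X : {set E}) : kS_sep (~: X) = kS_sep X.
Proof. by rewrite /Defs.kS_sep setCK ksepC; congr (_ && _); apply: andbC. Qed.

Hypothesis tc : tree_compatible lam k T S.

Lemma kS_sep_fcl_neqT (X : {set E}) : kS_sep X -> fcl X != setT.
Proof.
case: tc => memS _ /and3P [_ _ /memS [kXc sX]].
by rewrite /Defs.sequential kXc sX setCK.
Qed.

Lemma kS_sep_setCU_neq0 (X P : {set E}) :
  kS_sep X -> P \subset fcl X -> ~: (X :|: P) != set0.
Proof.
move=> kSX Pfcl; apply: contra (kS_sep_fcl_neqT kSX) => /eqP XPc0.
by rewrite -(fcl_setU_idr Pfcl) -[X :|: P]setCK XPc0 setC0 eqEsubset subsetT subset_fcl.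
Qed.

Lemma kS_sep_setU_fcl (X P Q : {set E}) :
  kS_sep X -> strong P -> strong Q -> ksep (P :|: Q) -> P \subset fcl Q ->
  Q \subset X -> P \subset ~: X -> strong (~: (X :|: P)) ->
  kS_sep (X :|: P) /\ tequiv X (X :|: P).
Proof.
move=> kSX sP sQ kPQ Pfcl QX PXc sXPc.
case: tc => memS [equivS _]; have /and3P [kX _ XcS] := kSX.
have [_ sX _] := memS _ XcS; rewrite setCK in sX.
have PfclX : P \subset fcl X := subset_trans Pfcl (fclS QX).
have fclXP := fcl_setU_idr PfclX.
have fclXPc := fcl_setCU sX kX (kS_sep_fcl_neqT kSX) PfclX.
have kXP : ksep (X :|: P).
  have -> : X :|: P = X :|: (P :|: Q) by rewrite (setUC P) setUA (setUidPl QX).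
  apply: ksepU => //; first by apply: strongS sQ; rewrite subsetI QX subsetUr.
  by apply: strongS sP; rewrite setCI (subset_trans PXc) ?subsetUl.
split; last by left.
apply: (equivS _ X) => //; last by left.
by rewrite /Defs.strong_ksep kXP sXPc (strongS (subsetUl _ _) sX).
Qed.

End Connectivity.

Section Petals.
Variables (E : finType) (T : {set {set E}}) (Phi : seq {set E}).
Local Notation petal := (petal Phi).

Lemma displaysP (X : {set E}) : displays Phi X <->
  (forall e, e \in X -> exists2 i : 'I_(size Phi), e \in petal i & petal i \subset X).
Proof.
split=> [[I ->] e /bigcupP [i iI ei] | covX]; first by exists i => //; apply: bigcup_sup.
exists [set i : 'I_(size Phi) | petal i \subset X]; apply/setP => e.
apply/idP/bigcupP => [/covX [i ei iX] | [i]]; first by exists i; rewrite ?inE.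
by rewrite inE => /subsetP; apply.
Qed.

Lemma displays_petal (i : 'I_(size Phi)) : displays Phi (petal i).
Proof. by apply/displaysP => e ei; exists i. Qed.

Lemma displaysU (X Y : {set E}) :
  displays Phi X -> displays Phi Y -> displays Phi (X :|: Y).
Proof.
move=> /displaysP dX /displaysP dY; apply/displaysP => e.
case/setUP => [/dX | /dY] [i ei iXY]; exists i; rewrite // (subset_trans iXY) //.
  exact: subsetUl.
exact: subsetUr.
Qed.

Hypothesis partPhi : strong_partition T Phi.

Lemma petal_cover (e : E) : exists i : 'I_(size Phi), e \in petal i.
Proof.
case: partPhi => _ _ cover _.
have /bigcupP [i _ ei] : e \in \bigcup_(i < size Phi) petal i by rewrite cover inE.
by exists i.
Qed.

Lemma petal_uniq (i j : 'I_(size Phi)) e : e \in petal i -> e \in petal j -> i = j.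
Proof.
case: partPhi => _ disj _ _ ei ej; apply/eqP; apply: contraTT isT => ij.
by move/disjointFr: (disj i j (ltn_ord i) (ltn_ord j) ij) => /(_ e ei); rewrite ej.
Qed.

Lemma petal_meet_subset (X : {set E}) (i : 'I_(size Phi)) e :
  displays Phi X -> e \in petal i -> e \in X -> petal i \subset X.
Proof. by move=> /displaysP dX ei /dX [j ej jX]; rewrite (petal_uniq ei ej). Qed.

Lemma displaysC (X : {set E}) : displays Phi X -> displays Phi (~: X).
Proof.
move=> dX; apply/displaysP => e; rewrite inE => eX; have [i ei] := petal_cover e.
exists i => //; apply/subsetP => f fi; rewrite inE; apply: contra eX => fX.
exact: subsetP (petal_meet_subset dX fi fX) e ei.
Qed.

Lemma petal_subset_or_setC (X : {set E}) (i : 'I_(size Phi)) :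
  displays Phi X -> (petal i \subset X) || (petal i \subset ~: X).
Proof.
move=> dX; case: (boolP (petal i \subset ~: X)) => [|/subsetPn [e ei]].
  by rewrite orbT.
by rewrite inE negbK => eX; rewrite (petal_meet_subset dX ei eX).
Qed.

Lemma displays_strong (X : {set E}) : displays Phi X -> X != set0 -> strong T X.
Proof.
move=> /displaysP dX /set0Pn [e /dX [i _ iX]]; case: partPhi => _ _ _ sPhi.
exact: strongS iX (sPhi i (ltn_ord i)).
Qed.

End Petals.

Section Concatenation.
Variables (E : finType) (P1 P2 : {set E}) (rest : seq {set E}).
Local Notation Phi := [:: P1, P2 & rest].
Local Notation Phi' := [:: P1 :|: P2 & rest].

Lemma displays_concat (X : {set E}) :
  displays Phi X -> P1 :|: P2 \subset X -> displays Phi' X.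
Proof.
move=> /displaysP dX P12X; apply/displaysP => e /dX [[[|[|m]] lt_i] /= ei iX].
- by exists ord0; rewrite //= inE ei.
- by exists ord0; rewrite //= inE ei orbT.
- by exists (@Ordinal (size rest).+1 m.+1 lt_i).
Qed.

Lemma displays_unconcat (X : {set E}) : displays Phi' X -> displays Phi X.
Proof.
move=> /displaysP dX; apply/displaysP => e /dX [[[|m] lt_i] /= ei iX].
  case/setUP: ei => ei; [exists ord0 | exists (@Ordinal (size rest).+2 1 isT)] => //=.
    exact: subset_trans (subsetUl _ _) iX.
  exact: subset_trans (subsetUr _ _) iX.
by exists (@Ordinal (size rest).+2 m.+2 lt_i).
Qed.

Variables (lam : {set E} -> int) (k : int) (T S : {set {set E}}).

Lemma flower_le_unconcat : flower_le lam k T S Phi' Phi.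
Proof. by move=> X kSX /displays_unconcat dX; exists X => //; left. Qed.

Hypotheses (conn : conn_system lam) (tangle : is_tangle lam k T).
Hypotheses (tc : tree_compatible lam k T S) (flowerPhi : kflower lam k T Phi).
Hypothesis P1fcl : P1 \subset fcl lam k T P2.

Lemma concat_equiv_sep (X : {set E}) :
  kS_sep lam k S X -> displays Phi X -> P2 \subset X ->
  exists2 Y, kS_sep lam k S Y /\ displays Phi' Y & tequiv lam k T X Y.
Proof.
move=> kSX dX P2X; have [partPhi sepPhi] := flowerPhi.
have [_ _ _ strongPhi] := partPhi.
have P1_or := petal_subset_or_setC partPhi (@Ordinal (size rest).+2 0 isT) dX.
case/orP: P1_or => /= [P1X | P1Xc].
  by exists X; [split=> //; apply: displays_concat; rewrite // subUset P1X | left].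
have dXP : displays Phi (X :|: P1).
  exact: displaysU dX (displays_petal (Phi := Phi) (@Ordinal (size rest).+2 0 isT)).
have kP12 : ksep lam k (P1 :|: P2) by have [] := sepPhi 0%N isT.
have [|kSXP eqXP] := kS_sep_setU_fcl conn tangle tc kSX (strongPhi 0%N isT)
  (strongPhi 1%N isT) kP12 P1fcl P2X P1Xc.
  apply: (displays_strong partPhi (displaysC partPhi dXP)).
  by apply: (kS_sep_setCU_neq0 tc kSX); apply: subset_trans P1fcl _; apply: fclS.
exists (X :|: P1) => //; split=> //; apply: displays_concat dXP _.
by rewrite subUset subsetUr (subset_trans P2X) ?subsetUl.
Qed.

Lemma flower_le_concat : flower_le lam k T S Phi Phi'.
Proof.
move=> X kSX dX; have partPhi := flowerPhi.1.
have P2_or := petal_subset_or_setC partPhi (@Ordinal (size rest).+2 1 isT) dX.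
case/orP: P2_or => /= [P2X | P2Xc].
  exact: concat_equiv_sep.
have [|Y YPhi' eqY] := concat_equiv_sep (X := ~: X) _ (displaysC partPhi dX) P2Xc.
  by rewrite kS_sepC.
by exists Y => //; apply: tequivCl.
Qed.

End Concatenation.

Unset Implicit Arguments.
Theorem lemma4p3 (E : finType) (lam : {set E} -> int) (k : int)
  (T S : {set {set E}}) (P1 P2 : {set E}) (rest : seq {set E}) :
  conn_system lam ->
  is_tangle lam k T ->
  tree_compatible lam k T S ->
  kflower lam k T [:: P1, P2 & rest] ->
  P1 \subset fcl lam k T P2 ->
  flower_equiv lam k T S [:: P1 :|: P2 & rest] [:: P1, P2 & rest].
Proof.
move=> conn tangle tc flowerPhi P1fcl.
by split; [exact: flower_le_unconcat | exact: flower_le_concat].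
Qed.
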